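(* Let $f:\{-1,1\}^n\to\{-1,1\}$ be a boolean function, $V_1\subsetneq[n]$, $k\in[n]\setminus V_1$, $V_2=V_1\cup\{k\}$, $\epsilon\in(0,\tfrac12)$, and suppose $I_k(f)>0$. For $x\in\{-1,1\}^n$ and $S\subseteq V_1$ set $a_{x,S}=\min\{\widehat{f_{V_2^c\to x}}(S)^2,\widehat{f_{V_2^c\to x}}(S\cup\{k\})^2\}$ and $b_{x,S}=\max\{\widehat{f_{V_2^c\to x}}(S)^2,\widehat{f_{V_2^c\to x}}(S\cup\{k\})^2\}$. Then $$\mathbb{E}_x\sum_{S\subseteq V_1}(b_{x,S}^\epsilon-a_{x,S}^\epsilon)\,a_{x,S}\le I_k(f)\Big(\Big(\frac{I_k(f)}{4}\Big)^{-\epsilon}-1\Big),$$ with $x$ uniform on $\{-1,1\}^n$ and the convention $0^\epsilon\cdot 0=0$.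
   Context: $\mu_k$ flips the $k$-th coordinate; $I_k(f)=\mathbb{P}_x[f(x)\neq f(\mu_k(x))]$. For $J\subseteq[n]$ and $x\in\{-1,1\}^n$, the restriction $f_{J^c\to x}:\{-1,1\}^J\to\{-1,1\}$ is $f_{J^c\to x}(y)=f(z)$ with $z_i=y_i$ for $i\in J$ and $z_i=x_i$ for $i\notin J$; $\widehat{f_{J^c\to x}}(S)=\mathbb{E}_y[f_{J^c\to x}(y)\prod_{i\in S}y_i]$ for $S\subseteq J$, $y$ uniform on $\{-1,1\}^J$. *)

From HB Require Import structures.
From mathcomp Require Import all_boot all_order all_algebra.
From mathcomp Require Import reals exp.
Set Implicit Arguments. Unset Strict Implicit. Unset Printing Implicit Defensive.
Import Order.TTheory GRing.Theory Num.Theory.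
Local Open Scope ring_scope.

(* The cube {-1,1}^n: a point is a bool vector, coordinate b encodes
   the value (-1)^b, i.e. true <-> -1, false <-> 1. *)
Definition cube (n : nat) := {ffun 'I_n -> bool}.

Definition sgn (R : realType) (b : bool) : R := if b then -1 else 1.

Definition is_boolean (R : realType) n (f : cube n -> R) : Prop :=
  forall x, f x = 1 \/ f x = -1.

Definition flip n (k : 'I_n) (x : cube n) : cube n :=
  [ffun i => if i == k then ~~ x i else x i].

Definition infl (R : realType) n (f : cube n -> R) (k : 'I_n) : R :=
  #|[set x : cube n | f x != f (flip k x)]|%:R / (2 ^ n)%:R.

(* Fourier coefficient of the restriction f_{J^c -> x} at S (S subset of J):
   E_y[f(z) prod_{i in S} y_i], y uniform on {-1,1}^J, where the points
   z of {-1,1}^n agreeing with x off J are in bijection with y. *)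
Definition restr_coef (R : realType) n (f : cube n -> R) (J : {set 'I_n})
    (x : cube n) (S : {set 'I_n}) : R :=
  (\sum_(z : cube n | [forall i, (i \notin J) ==> (z i == x i)])
      f z * \prod_(i in S) sgn R (z i)) / (2 ^ #|J|)%:R.

(* Write I = I_k(f), c = I/4, and for x and S let u = \hat f(S)^2 and
   v = \hat f(S u {k})^2 for the restriction of f to V2 at x, so a = min u v
   and b = max u v.  Since exp is 1-Lipschitz on the nonpositive reals,
   b^eps - a^eps <= eps ln (b/a); then ln y <= y - 1 at y = c b / a, together
   with b <= u + v, a <= v and ln (1/c) >= 1, gives
   (b^eps - a^eps) a <= eps (c (u + v) + (ln (1/c) - 1) v).
   Parseval on the subcube bounds the sum of the u's by 1.  The derivative
   D_k f z = z_k (f z - f (mu_k z)) / 2 satisfies \hat f(S u {k}) = \hat{D_k f}(S)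
   and (D_k f)^2 is the indicator that k is pivotal, so the x-average of the
   sum of the v's is at most I.  Hence the left side is at most
   eps (c (1 + I) + (ln (1/c) - 1) I) <= eps I ln (1/c) <= I (c^-eps - 1). *)

From HB Require Import structures.
From mathcomp Require Import all_boot all_order all_algebra.
From mathcomp Require Import reals sequences exp.
From mathcomp Require Import ring lra.
Set Implicit Arguments. Unset Strict Implicit. Unset Printing Implicit Defensive.
Import Order.TTheory GRing.Theory Num.Theory.
Local Open Scope ring_scope.

Lemma ler_sum_subpred (R : numDomainType) (I : finType) (P Q : pred I) (F : I -> R) :
  (forall i, P i -> Q i) -> (forall i, Q i -> 0 <= F i) ->
  \sum_(i | P i) F i <= \sum_(i | Q i) F i.
Proof.
move=> PQ F0; rewrite [leRHS](bigID P) /=.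
have -> : \sum_(i | Q i && P i) F i = \sum_(i | P i) F i.
  by apply: eq_bigl => i; case Pi: (P i); rewrite ?andbF ?PQ.
by rewrite lerDl sumr_ge0 // => i /andP[Qi _]; exact: F0.
Qed.

Lemma ler_sum_term (R : numDomainType) (I : finType) (P : pred I) (F : I -> R) j :
  P j -> (forall i, P i -> 0 <= F i) -> F j <= \sum_(i | P i) F i.
Proof.
move=> Pj F0; have -> : F j = \sum_(i | i == j) F i by rewrite big_pred1_eq.
by apply: ler_sum_subpred => // i /eqP->.
Qed.

Section RealInequalities.
Variable R : realType.
Implicit Types a b c e p q u v y : R.

Lemma ln_le_subr1 y : 0 < y -> ln y <= y - 1.
Proof.
move=> y0; have := @le_ln1Dx R (y - 1).
by rewrite [1 + _]addrC subrK; apply; lra.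
Qed.

Lemma expR_sub_le p q : q <= p -> p <= 0 -> expR p - expR q <= p - q.
Proof.
move=> qp p0.
have -> : expR p - expR q = expR p * (1 - expR (q - p)).
  by rewrite mulrBr mulr1 -expRD [p + _]addrC subrK.
have e1 : expR p <= 1 by rewrite expR_le1.
have ep := expR_gt0 p; have := expR_ge1Dx (q - p) => exp_ge.
apply: (@le_trans _ _ (expR p * (p - q))); first by rewrite ler_wpM2l //; lra.
by rewrite -[leRHS]mul1r ler_wpM2r //; lra.
Qed.

Lemma powR_sub_le a b e : 0 < a -> a <= b -> b <= 1 -> 0 < e ->
  b `^ e - a `^ e <= e * (ln b - ln a).
Proof.
move=> a0 ab b1 e0; have b0 : 0 < b by lra.
rewrite /powR !gt_eqF // mulrBr.
apply: expR_sub_le; first by rewrite (ler_wpM2l (ltW e0)) // ler_ln ?posrE.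
exact: mulr_ge0_le0 (ltW e0) (ln_le0 b1).
Qed.

Lemma mul_ln_ratio_le a b c : 0 < a -> 0 < b -> 0 < c ->
  a * (ln b - ln a) <= c * b - a + a * ln c^-1.
Proof.
move=> a0 b0 c0; have := ln_le_subr1 (divr_gt0 (mulr_gt0 c0 b0) a0).
rewrite ln_div ?lnM ?lnV ?posrE ?mulr_gt0 // => ln_le.
have -> : c * b - a = a * (c * b / a - 1) by field; rewrite gt_eqF.
rewrite -mulrDr; apply: ler_wpM2l; [exact: ltW | lra].
Qed.

Lemma powR_gap_mul_le a b c e : 0 <= a -> a <= b -> b <= 1 -> 0 < c -> 0 < e ->
  (b `^ e - a `^ e) * a <= e * (c * b - a + a * ln c^-1).
Proof.
move=> a0 ab b1 c0 e0; have [->|a_neq0] := eqVneq a 0.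
  rewrite mulr0 mul0r subr0 addr0.
  by apply: mulr_ge0; [lra | apply: mulr_ge0; lra].
have a_gt0 : 0 < a by rewrite lt_def a_neq0.
apply: (@le_trans _ _ (e * (ln b - ln a) * a)).
  by rewrite ler_wpM2r // powR_sub_le.
rewrite -mulrA [_ * a]mulrC; apply: ler_wpM2l; first exact: ltW.
by apply: mul_ln_ratio_le => //; lra.
Qed.

Lemma powR_gap_min_le u v c e : 0 <= u <= 1 -> 0 <= v <= 1 -> 0 < c -> 1 <= ln c^-1 ->
  0 < e ->
  (Num.max u v `^ e - Num.min u v `^ e) * Num.min u v
    <= e * (c * (u + v) + (ln c^-1 - 1) * v).
Proof.
move=> /andP[u0 u1] /andP[v0 v1] c0 L1 e0.
have [m0 mM M1 Muv mv] : [/\ 0 <= Num.min u v, Num.min u v <= Num.max u v,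
    Num.max u v <= 1, Num.max u v <= u + v & Num.min u v <= v].
  by rewrite minEle maxEle; case: (leP u v) => uv; split; lra.
apply: le_trans (powR_gap_mul_le m0 mM M1 c0 e0) _.
apply: (ler_wpM2l (ltW e0)).
have -> : c * Num.max u v - Num.min u v + Num.min u v * ln c^-1
    = c * Num.max u v + (ln c^-1 - 1) * Num.min u v by ring.
by apply: lerD; apply: ler_wpM2l => //; [exact: ltW | rewrite subr_ge0].
Qed.

Lemma sum_powR_gap_min_le (T : finType) (P : pred T) (u v : T -> R) c e U V :
  (forall i, P i -> 0 <= u i <= 1) -> (forall i, P i -> 0 <= v i <= 1) ->
  0 < c -> 1 <= ln c^-1 -> 0 < e ->
  \sum_(i | P i) u i <= U -> \sum_(i | P i) v i <= V ->
  \sum_(i | P i)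
      (Num.max (u i) (v i) `^ e - Num.min (u i) (v i) `^ e) * Num.min (u i) (v i)
    <= e * (c * (U + V) + (ln c^-1 - 1) * V).
Proof.
move=> u01 v01 c0 L1 e0 sU sV.
have term_le i (Pi : P i) := powR_gap_min_le (u01 i Pi) (v01 i Pi) c0 L1 e0.
apply: le_trans (ler_sum _ term_le) _.
rewrite -mulr_sumr big_split /= -!mulr_sumr big_split /=.
apply: (ler_wpM2l (ltW e0)); apply: lerD.
  by apply: (ler_wpM2l (ltW c0)); apply: lerD.
by apply: ler_wpM2l => //; rewrite subr_ge0.
Qed.

Lemma ln_inv_quarter_ge1 y : 0 < y <= 1 -> 1 <= ln (y / 4)^-1.
Proof.
move=> /andP[y0 y1].
have h1 : ln (y / 2) <= - 2^-1.
  by apply: le_trans (ln_le_subr1 _) _; [rewrite divr_gt0 | lra].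
have h2 : ln (2^-1 : R) <= - 2^-1.
  by apply: le_trans (ln_le_subr1 _) _; [rewrite invr_gt0 | lra].
have -> : y / 4 = y / 2 * 2^-1 by field.
rewrite lnV ?posrE ?mulr_gt0 ?divr_gt0 ?invr_gt0 //.
by rewrite lnM ?posrE ?divr_gt0 ?invr_gt0 //; lra.
Qed.

Lemma powRN_ge1D_ln c e : 0 < c -> 1 + e * ln c^-1 <= c `^ (- e).
Proof.
move=> c0; rewrite /powR gt_eqF // lnV ?posrE // mulrN mulNr.
exact: expR_ge1Dx.
Qed.

Lemma le_powRN_quarter (y e : R) : 0 < y <= 1 -> 0 < e ->
  e * (y / 4 * (1 + y) + (ln (y / 4)^-1 - 1) * y) <= y * ((y / 4) `^ (- e) - 1).
Proof.
move=> /andP[y0 y1] e0; set L := ln (y / 4)^-1.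
have c0 : 0 < y / 4 by rewrite divr_gt0.
have := powRN_ge1D_ln e c0; rewrite -/L => eL_le.
apply: (@le_trans _ _ (y * (e * L))).
  rewrite -subr_ge0.
  have -> : y * (e * L) - e * (y / 4 * (1 + y) + (L - 1) * y)
    = e * y * (3 - y) / 4 by field.
  apply: divr_ge0; last by [].
  by apply: mulr_ge0; [apply: mulr_ge0; exact: ltW | lra].
by apply: (ler_wpM2l (ltW y0)); lra.
Qed.

End RealInequalities.

Section RestrictionFourier.
Variables (R : realType) (n : nat).
Implicit Types (J S T : {set 'I_n}) (x z w : cube n) (g h : cube n -> R).

Definition agree_off J x z := [forall i, (i \notin J) ==> (z i == x i)].

Definition chi T z : R := \prod_(i in T) sgn R (z i).

Definition fibre_mean J x g : R :=
  (\sum_(z | agree_off J x z) g z) / (2 ^ #|J|)%:R.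

Lemma restr_coefE h J x T :
  restr_coef h J x T = fibre_mean J x (fun z => h z * chi T z).
Proof. by []. Qed.

Lemma agree_offxx J x : agree_off J x x.
Proof. by apply/forallP => i; apply/implyP. Qed.

Lemma agree_offC J x z : agree_off J x z = agree_off J z x.
Proof. by apply/forallP/forallP => H i; have := H i; rewrite eq_sym. Qed.

Lemma sgn_sqr b : sgn R b ^+ 2 = 1.
Proof. by case: b; rewrite /sgn ?sqrrN expr1n. Qed.

Lemma sum_subset_prod (u : 'I_n -> R) J :
  \sum_(T : {set 'I_n} | T \subset J) \prod_(i in T) u i = \prod_(i in J) (1 + u i).
Proof.
pose v i := if i \in J then u i else 0.
have -> : \prod_(i in J) (1 + u i) = \prod_i (v i + 1).
  rewrite big_mkcond; apply: eq_bigr => i _.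
  by rewrite /v addrC; case: ifP; rewrite ?add0r.
rewrite bigA_distr [RHS](bigID (fun T : {set 'I_n} => T \subset J)) /=.
rewrite [X in _ = _ + X]big1 ?addr0 => [|T /subsetPn[i iT iJ]]; last first.
  by rewrite (bigD1 i) //= iT /v (negbTE iJ) mul0r.
apply: eq_bigr => T /subsetP TJ; rewrite big_mkcond; apply: eq_bigr => i _.
by case: ifP => // /TJ iJ; rewrite /v iJ.
Qed.

Lemma sum_chiM J x z w : agree_off J x z -> agree_off J x w ->
  \sum_(T : {set 'I_n} | T \subset J) chi T z * chi T w
    = if z == w then (2 ^ #|J|)%:R else 0.
Proof.
move=> /forallP zJ /forallP wJ.
under eq_bigr => T _ do rewrite /chi -big_split /=.
rewrite sum_subset_prod; have [<-|zw] := eqVneq z w.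
  by under eq_bigr do rewrite -expr2 sgn_sqr; rewrite prodr_const natrX.
have [i zwi] : exists i, z i != w i.
  apply/existsP; apply: contraNT zw => /existsPn zw.
  by apply/eqP/ffunP => i; apply/eqP/negPn.
have iJ : i \in J.
  by apply: contraR zwi => iJ; move: (zJ i) (wJ i); rewrite iJ /= => /eqP-> /eqP->.
rewrite (bigD1 i) //= [_ + _](_ : _ = 0) ?mul0r //.
by move: zwi; case: (z i); case: (w i); rewrite /sgn ?mulrN1 ?mulN1r ?subrr.
Qed.

Lemma restr_parseval h J x :
  \sum_(T : {set 'I_n} | T \subset J) restr_coef h J x T ^+ 2
  = fibre_mean J x (fun z => h z ^+ 2).
Proof.
set D : R := (2 ^ #|J|)%:R; have D0 : D != 0 by rewrite pnatr_eq0 expn_eq0.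
(* Expand each square over pairs (z, w) of the fibre; summing over T first,
   character orthogonality leaves only the diagonal. *)
transitivity (\sum_(T : {set 'I_n} | T \subset J) \sum_(z | agree_off J x z)
    \sum_(w | agree_off J x w) h z * h w / (D * D) * (chi T z * chi T w)).
  apply: eq_bigr => T _; rewrite restr_coefE /fibre_mean expr2 mulf_div big_distrlr /=.
  rewrite big_distrl /=; apply: eq_bigr => z _; rewrite big_distrl /=.
  by apply: eq_bigr => w _; rewrite -/D; field.
rewrite exchange_big /= /fibre_mean big_distrl /=; apply: eq_bigr => z zJ.
rewrite exchange_big /=.
under eq_bigr => w wJ do rewrite -big_distrr /= (sum_chiM zJ wJ).
rewrite (bigD1 z) //= eqxx big1 ?addr0 => [|w /andP[_ wz]]; last first.
  by rewrite eq_sym (negbTE wz) mulr0.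
by rewrite -/D; field.
Qed.

Lemma eq_fibre_mean J x g h : g =1 h -> fibre_mean J x g = fibre_mean J x h.
Proof. by move=> gh; rewrite /fibre_mean (eq_bigr _ (fun z _ => gh z)). Qed.

(* The empty-set coefficient of the constant 1 is the fibre mean [m] of 1,
   so Parseval gives [m ^+ 2 <= m]. *)
Lemma fibre_mean1_le1 J x : fibre_mean J x (fun => 1) <= 1.
Proof.
set m := fibre_mean J x (fun => 1).
have m_gt0 : 0 < m.
  rewrite divr_gt0 ?ltr0n ?expn_gt0 // (bigD1 x) ?agree_offxx //=.
  by rewrite ltr_pwDl ?sumr_ge0.
have coef0 : restr_coef (fun => 1) J x set0 = m.
  by rewrite restr_coefE; apply: eq_fibre_mean => z; rewrite /chi big_set0 mulr1.
have : m ^+ 2 <= m.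
  rewrite -{1}coef0 [leRHS](_ : m = fibre_mean J x (fun => 1 ^+ 2)); last first.
    by apply: eq_fibre_mean => z; rewrite expr1n.
  rewrite -restr_parseval.
  by apply: (ler_sum_term (sub0set J)) => T _; exact: sqr_ge0.
by move=> m2_le_m; rewrite -(ler_pM2l m_gt0) mulr1 -expr2.
Qed.

Lemma sum_fibre_mean_le J g : (forall z, 0 <= g z) ->
  \sum_x fibre_mean J x g <= \sum_z g z.
Proof.
move=> g0; rewrite /fibre_mean -mulr_suml.
rewrite (exchange_big_dep xpredT) //= mulr_suml; apply: ler_sum => z _.
have -> : \sum_(x | agree_off J x z) g z = g z * \sum_(x | agree_off J z x) 1.
  rewrite mulr_sumr; apply: congr_big => // [x|x _]; first exact: agree_offC.
  by rewrite mulr1.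
by rewrite -mulrA ler_piMr // fibre_mean1_le1.
Qed.

Definition cube_deriv (f : cube n -> R) k z : R :=
  sgn R (z k) * (f z - f (flip k z)) / 2.

Lemma flipK k : involutive (@flip n k).
Proof.
by move=> z; apply/ffunP => i; rewrite !ffunE; case: eqP => // ->; rewrite negbK.
Qed.

Lemma sgn_flip k z : sgn R (flip k z k) = - sgn R (z k).
Proof. by rewrite ffunE eqxx; case: (z k); rewrite /sgn ?opprK. Qed.

Lemma chi_flip k T z : k \notin T -> chi T (flip k z) = chi T z.
Proof.
move=> kT; apply: eq_bigr => i iT; rewrite ffunE; case: eqP => // ik.
by move: kT; rewrite -ik iT.
Qed.

Lemma agree_off_flip k J x z : k \in J -> agree_off J x (flip k z) = agree_off J x z.
Proof.
move=> kJ; apply: eq_forallb => i; rewrite ffunE.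
by have [->|//] := eqVneq i k; rewrite kJ.
Qed.

(* Reindexing by [flip k] shows that [f o flip k] has the opposite [k |: S]
   coefficient. *)
Lemma restr_coef_cube_deriv f k J x S : k \in J -> k \notin S ->
  restr_coef (cube_deriv f k) J x S = restr_coef f J x (k |: S).
Proof.
move=> kJ kS; rewrite !restr_coefE /fibre_mean; congr (_ / _).
have chiU z : chi (k |: S) z = sgn R (z k) * chi S z by rewrite /chi big_setU1.
have flip_sum : \sum_(z | agree_off J x z) f (flip k z) * chi (k |: S) z
    = - \sum_(z | agree_off J x z) f z * chi (k |: S) z.
  rewrite (reindex_inj (inv_inj (flipK k))) /= -sumrN.
  apply: congr_big => // [z|z _]; first by rewrite agree_off_flip.
  by rewrite flipK !chiU sgn_flip chi_flip // mulNr mulrN.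
transitivity ((\sum_(z | agree_off J x z) f z * chi (k |: S) z
    - \sum_(z | agree_off J x z) f (flip k z) * chi (k |: S) z) / 2).
  rewrite -sumrB mulr_suml; apply: eq_bigr => z _.
  by rewrite /cube_deriv chiU; ring.
by rewrite flip_sum opprK; field.
Qed.

End RestrictionFourier.

Section Influence.
Variables (R : realType) (n : nat) (f : cube n -> R) (k : 'I_n).
Implicit Types (z x : cube n) (J V T : {set 'I_n}).

Lemma infl_le1 : infl f k <= 1.
Proof.
rewrite /infl ler_pdivrMr ?ltr0n ?expn_gt0 // mul1r ler_nat.
by apply: leq_trans (max_card _) _; rewrite card_ffun card_bool card_ord.
Qed.

Lemma sum_restr_coef_setU1_sqr_le J V x :
  k \in J -> k \notin V -> V \subset J ->
  \sum_(S : {set 'I_n} | S \subset V) restr_coef f J x (k |: S) ^+ 2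
    <= fibre_mean J x (fun z => cube_deriv f k z ^+ 2).
Proof.
move=> kJ kV VJ; rewrite -restr_parseval.
rewrite (eq_bigr (fun S => restr_coef (cube_deriv f k) J x S ^+ 2)) => [|S SV];
  last first.
  by rewrite restr_coef_cube_deriv //; apply: contra kV; exact: (subsetP SV).
apply: ler_sum_subpred => [S SV|S _]; [exact: subset_trans SV VJ | exact: sqr_ge0].
Qed.

Hypothesis f_bool : is_boolean f.

Lemma boolean_sqr z : f z ^+ 2 = 1.
Proof. by case: (f_bool z) => ->; rewrite ?sqrrN expr1n. Qed.

Lemma cube_deriv_sqr z : cube_deriv f k z ^+ 2 = (f z != f (flip k z))%:R.
Proof.
have n11 : (1 : R) != -1 by apply/eqP; lra.
rewrite /cube_deriv !exprMn sgn_sqr mul1r.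
case: (f_bool z) => ->; case: (f_bool (flip k z)) => ->;
  by rewrite ?eqxx ?n11 1?eq_sym ?n11 /=; field.
Qed.

Lemma sum_cube_deriv_sqr : \sum_z cube_deriv f k z ^+ 2 = (2 ^ n)%:R * infl f k.
Proof.
rewrite /infl mulrC divfK ?pnatr_eq0 ?expn_eq0 // -sum1_card natr_sum.
rewrite [RHS]big_mkcond; apply: eq_bigr => z _.
by rewrite cube_deriv_sqr inE; case: ifP.
Qed.

Lemma sum_restr_coef_sqr_le1 J x :
  \sum_(T : {set 'I_n} | T \subset J) restr_coef f J x T ^+ 2 <= 1.
Proof.
rewrite restr_parseval (eq_fibre_mean _ _ (g := fun z => f z ^+ 2) boolean_sqr).
exact: fibre_mean1_le1.
Qed.

Lemma restr_coef_sqr_le1 J x T : T \subset J -> restr_coef f J x T ^+ 2 <= 1.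
Proof.
move=> TJ; apply: le_trans (sum_restr_coef_sqr_le1 J x).
by apply: (ler_sum_term TJ) => S _; exact: sqr_ge0.
Qed.

Lemma sum2_restr_coef_sqr_le J V : V \subset J ->
  \sum_x \sum_(S : {set 'I_n} | S \subset V) restr_coef f J x S ^+ 2 <= (2 ^ n)%:R.
Proof.
move=> VJ; apply: (@le_trans _ _ (\sum_(x : cube n) 1)).
  apply: ler_sum => x _; apply: le_trans (sum_restr_coef_sqr_le1 J x).
  by apply: ler_sum_subpred => [S SV|S _]; [exact: subset_trans SV VJ | exact: sqr_ge0].
by rewrite sumr_const card_ffun card_bool card_ord.
Qed.

Lemma sum2_restr_coef_setU1_sqr_le J V : k \in J -> k \notin V -> V \subset J ->
  \sum_x \sum_(S : {set 'I_n} | S \subset V) restr_coef f J x (k |: S) ^+ 2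
    <= (2 ^ n)%:R * infl f k.
Proof.
move=> kJ kV VJ; rewrite -sum_cube_deriv_sqr.
apply: le_trans (sum_fibre_mean_le J (fun z => sqr_ge0 _)).
by apply: ler_sum => x _; exact: sum_restr_coef_setU1_sqr_le.
Qed.

End Influence.

Theorem mainTheorem8 (R : realType) (n : nat) (f : cube n -> R)
  (V1 : {set 'I_n}) (k : 'I_n) (eps : R) :
  is_boolean f ->
  V1 \proper [set: 'I_n] ->
  k \notin V1 ->
  0 < eps < 2^-1 ->
  0 < infl f k ->
  let V2 := k |: V1 in
  let a x S := Num.min (restr_coef f V2 x S ^+ 2) (restr_coef f V2 x (k |: S) ^+ 2) in
  let b x S := Num.max (restr_coef f V2 x S ^+ 2) (restr_coef f V2 x (k |: S) ^+ 2) in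
  (\sum_(x : cube n) \sum_(S : {set 'I_n} | S \subset V1)
      (powR (b x S) eps - powR (a x S) eps) * a x S) / (2 ^ n)%:R
  <= infl f k * (powR (infl f k / 4) (- eps) - 1).
Proof.
move=> f_bool _ kV1 /andP[eps_gt0 _] I_gt0; cbv zeta.
have I_le1 := infl_le1 f k; set I := infl f k in I_gt0 I_le1 *.
have c_gt0 : 0 < I / 4 by rewrite divr_gt0.
have L_ge1 : 1 <= ln (I / 4)^-1 by rewrite ln_inv_quarter_ge1 ?I_gt0.
set N : R := (2 ^ n)%:R; have N_gt0 : 0 < N by rewrite ltr0n expn_gt0.
have kV2 : k \in k |: V1 by rewrite setU11.
have V1V2 : V1 \subset k |: V1 by rewrite subsetUr.
pose P (p : cube n * {set 'I_n}) := true && (p.2 \subset V1).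
have pairE (F : cube n -> {set 'I_n} -> R) :
    \sum_x \sum_(S : {set 'I_n} | S \subset V1) F x S = \sum_(p | P p) F p.1 p.2.
  exact: pair_big_dep.
have sum_u : \sum_(p | P p) restr_coef f (k |: V1) p.1 p.2 ^+ 2 <= N.
  by rewrite -(pairE (fun x S => restr_coef f _ x S ^+ 2)) sum2_restr_coef_sqr_le.
have sum_v : \sum_(p | P p) restr_coef f (k |: V1) p.1 (k |: p.2) ^+ 2 <= N * I.
  by rewrite -(pairE (fun x S => restr_coef f _ x (k |: S) ^+ 2))
    sum2_restr_coef_setU1_sqr_le.
rewrite pairE ler_pdivrMr //.
apply: le_trans (sum_powR_gap_min_le _ _ c_gt0 L_ge1 eps_gt0 sum_u sum_v) _.
- by move=> [x S] /= SV1; rewrite sqr_ge0 restr_coef_sqr_le1 // (subset_trans SV1).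
- by move=> [x S] /= SV1; rewrite sqr_ge0 restr_coef_sqr_le1 // setUSS.
have -> : eps * (I / 4 * (N + N * I) + (ln (I / 4)^-1 - 1) * (N * I))
    = N * (eps * (I / 4 * (1 + I) + (ln (I / 4)^-1 - 1) * I)) by ring.
rewrite [leRHS]mulrC; apply: (ler_wpM2l (ltW N_gt0)).
by apply: le_powRN_quarter; rewrite ?I_gt0.
Qed.
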